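(* Let $p$ be a prime and let $G_1,\ldots,G_n$ be finite groups. Then \[ 1-\chi\big(\mathcal F^*_{\prod_{i=1}^nG_i}\big)=\prod_{i=1}^n\big(1-\chi(\mathcal F^*_{G_i})\big). \]
   Context: For a finite group $X$, $\mathcal F^*_X$ is the category whose objects are the nonidentity $p$-subgroups of $X$ and whose morphism sets are $\mathcal F^*_X(H,K)=C_X(H)\backslash N_X(H,K)$, where $N_X(H,K)=\{g\in X: g^{-1}Hg\le K\}$, with composition induced by multiplication in $X$. Leinster Euler characteristic: for a finite category $\mathcal C$ let $\zeta(a,b)=|\mathcal C(a,b)|$; a weighting is $k^\bullet:\mathrm{Ob}(\mathcal C)\to\mathbb Q$ with $\sum_b\zeta(a,b)k^b=1$ for all $a$, a coweighting is $k_\bullet$ with $\sum_ak_a\zeta(a,b)=1$ for all $b$; if both exist, $\chi(\mathcal C)=\sum_bk^b=\sum_ak_a$. *)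

From HB Require Import structures.
From mathcomp Require Import all_boot all_order all_algebra all_fingroup all_solvable.
Set Implicit Arguments. Unset Strict Implicit. Unset Printing Implicit Defensive.
Import GRing.Theory.
Local Open Scope group_scope.

Definition Fstar_obj (p : nat) (gT : finGroupType) (X : {set gT})
  : {set {group gT}} :=
  [set H : {group gT} | [&& H \subset X, p.-group H & H != 1 :> {set gT}]].

(* N_X(H,K) = { g in X : g^-1 H g <= K }   (H :^ g = g^-1 H g in mathcomp) *)
Definition transporter (gT : finGroupType) (X H K : {set gT}) : {set gT} :=
  [set g in X | H :^ g \subset K].

(* F*_X(H,K) = C_X(H) \ N_X(H,K) : the orbits C_X(H) g, g in N_X(H,K). *)
Definition Fstar_hom (gT : finGroupType) (X H K : {set gT})
  : {set {set gT}} :=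
  rcosets 'C_X(H) (transporter X H K).

Definition Fstar_zeta (gT : finGroupType) (X H K : {set gT}) : nat :=
  #|Fstar_hom X H K|.

(* A finite category given by its finite object set Ob (a finite set of
   elements of a finType O) and the cardinalities zeta a b = |C(a,b)|. *)

Definition is_weighting (O : finType) (Ob : {set O}) (zeta : O -> O -> nat)
  (k : O -> rat) : Prop :=
  forall a, a \in Ob -> (\sum_(b in Ob) (zeta a b)%:R * k b = 1)%R.

Definition is_coweighting (O : finType) (Ob : {set O}) (zeta : O -> O -> nat)
  (k : O -> rat) : Prop :=
  forall b, b \in Ob -> (\sum_(a in Ob) k a * (zeta a b)%:R = 1)%R.

Definition euler_char (O : finType) (Ob : {set O}) (zeta : O -> O -> nat)
  (x : rat) : Prop :=
  exists (kw kc : O -> rat),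
    [/\ is_weighting Ob zeta kw, is_coweighting Ob zeta kc,
        x = (\sum_(b in Ob) kw b)%R & x = (\sum_(a in Ob) kc a)%R].

Definition Fstar_euler_char (p : nat) (gT : finGroupType) (X : {set gT})
  (x : rat) : Prop :=
  euler_char (Fstar_obj p X) (fun H K : {group gT} => Fstar_zeta X H K) x.

(* prodT gT n = (...((1 * gT 0) * gT 1) ... * gT (n-1)),
   with the trivial group {perm void} as the empty product. *)
Fixpoint prodT (gT : nat -> finGroupType) (n : nat) : finGroupType :=
  match n with
  | 0 => {perm void}
  | m.+1 => (prodT gT m * gT m)%type
  end.

Fixpoint prodG (gT : nat -> finGroupType) (G : forall i, {group gT i}) (n : nat)
  : {group prodT gT n} :=
  match n return {group prodT gT n} with
  | 0 => [1 {perm void}]%G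
  | m.+1 => setX_group (prodG G m) (G m)
  end.

From HB Require Import structures.
From mathcomp Require Import all_boot all_order all_algebra all_fingroup all_solvable.
Import GRing.Theory Num.Theory.
Set Implicit Arguments. Unset Strict Implicit. Unset Printing Implicit Defensive.

(* Since |F*_X(H,K)| = |N_X(H,K)| / |C_X(H)|, a function k on the p-subgroups
   of X, the trivial one included, with  sum_(K >= H) k(K) = |C_X(H)| / |X|
   for all H restricts to a weighting of F*_X: summing over g in X turns
   sum_K zeta(H,K) k(K) into an average of these sums over the conjugates of H.
   The weighting has total 1 - k(1), and a coweighting exists by the same
   argument, so chi(F*_X) = 1 - k(1).  For X = A x B we have
   C_(A x B)(H) = C_A(pr1 H) x C_B(pr2 H), and H <= E x F iff pr1 H <= E and
   pr2 H <= F; hence k_A (x) k_B, supported on the product subgroups, is the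
   function k for A x B, and 1 - chi = k(1) is multiplicative. *)

Local Open Scope group_scope.
Local Open Scope ring_scope.

Lemma triangular_system_solvable (O : finType) (R : zmodType) (le : rel O)
    (r : O -> nat) (f : O -> R) :
  reflexive le -> (forall x y, le x y -> x != y -> (r x < r y)%N) ->
  forall S : {set O}, exists k : O -> R,
    forall x, x \in S -> \sum_(y in S | le x y) k y = f x.
Proof.
move=> lexx ltr S; elim: {S}_.+1 {-2}S (ltnSn #|S|) => // n IH S.
have [-> _|[x0 x0S] leS] := set_0Vmem S; first by exists (fun _ => 0) => x; rewrite inE.
(* An element m of minimal rank is above no other element of S, so it only
   occurs in its own equation, which then determines k m. *)
have [m mS0 m_min] := arg_minnP r x0S; have mS : m \in S := mS0.
have [k kP] : exists k : O -> R,
    forall x, x \in S :\ m -> \sum_(y in S :\ m | le x y) k y = f x.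
  by apply: IH; rewrite (cardsD1 m S) mS add1n ltnS in leS.
exists (fun y => if y == m then f m - \sum_(z in S :\ m | le m z) k z else k y).
have sumD1 y0 : \sum_(y | (y \in S) && le y0 y && (y != m))
    (if y == m then f m - \sum_(z in S :\ m | le m z) k z else k y)
    = \sum_(y in S :\ m | le y0 y) k y.
  apply: eq_big => [y|y /andP[_ /negPf ->]] //.
  by rewrite in_setD1 andbC andbA andbAC.
move=> x xS; have [->|xm] := eqVneq x m.
  by rewrite (bigD1 m) ?mS ?lexx //= eqxx sumD1 subrK.
have nle_xm : ~~ le x m by apply: contraTN (m_min x xS) => /ltr/(_ xm); rewrite -ltnNge.
rewrite -(kP x) ?in_setD1 ?xm // -(sumD1 x); apply: eq_bigl => y.
by case: (eqVneq y m) => [->|]; rewrite ?(negPf nle_xm) ?andbF ?andbT.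
Qed.

Lemma euler_char_weighting (O : finType) (Ob : {set O}) (zeta : O -> O -> nat)
    (kw kc : O -> rat) :
  is_weighting Ob zeta kw -> is_coweighting Ob zeta kc ->
  euler_char Ob zeta (\sum_(b in Ob) kw b).
Proof.
move=> kwP kcP; exists kw, kc; split=> //.
transitivity (\sum_(b in Ob) (\sum_(a in Ob) kc a * (zeta a b)%:R) * kw b).
  by apply: eq_bigr => b /kcP ->; rewrite mul1r.
under eq_bigr do rewrite big_distrl /=.
rewrite exchange_big /=; apply: eq_bigr => a /kwP kwa.
rewrite -[RHS]mulr1 -[in RHS]kwa big_distrr /=.
by apply: eq_bigr => b _; rewrite mulrA.
Qed.

Lemma sum_mulrb_eq (T : finType) (R : nmodType) (P : pred T) (x0 : T) (F : T -> R) :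
  \sum_(x | P x) F x *+ (x == x0) = F x0 *+ P x0.
Proof.
under eq_bigr do rewrite mulrb; rewrite -big_mkcondr.
case: (boolP (P x0)) => Px0.
  by rewrite (big_pred1 x0) // => x; rewrite /= andb_idl // => /eqP ->.
by rewrite big_pred0 // => x; apply: contraNF Px0 => /andP[Px /eqP <-].
Qed.

Lemma rcosets_partition_mul_set (gT : finGroupType) (A : {set gT}) (H : {group gT}) :
  partition (rcosets H A) (H * A)%g.
Proof.
set HA := (H * A)%g; have sAHA : {subset A <= HA} by apply/subsetP/mulG_subr.
have defHx x : x \in HA -> [set y in HA | rcoset H x == rcoset H y] = H :* x.
  move=> HAx; apply/setP=> y; rewrite inE !rcosetE (sameP eqP rcoset_eqP).
  by rewrite rcoset_sym; apply/andb_idl/subsetP; rewrite mulGS sub1set.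
have:= preim_partitionP (rcoset H) HA; congr (partition _ _); apply/setP=> Hx.
apply/imsetP/idP=> [[x HAx ->] | ]; first by rewrite defHx // mem_rcosets.
by case/rcosetsP=> x /sAHA-HAx ->; exists x; rewrite ?defHx.
Qed.

Lemma proper_group_card (gT : finGroupType) (H K : {group gT}) :
  H \subset K -> H != K -> (#|H| < #|K|)%N.
Proof. by move=> sHK neHK; rewrite proper_card // properEneq sHK andbT. Qed.

Definition psubgroups (p : nat) (gT : finGroupType) (X : {set gT}) : {set {group gT}} :=
  [set H : {group gT} | (H \subset X) && p.-group H].

Definition cent_ratio (gT : finGroupType) (X H : {set gT}) : rat :=
  #|'C_X(H)|%:R / #|X|%:R.

Definition psub_moebius (p : nat) (gT : finGroupType) (X : {set gT})
    (k : {group gT} -> rat) : Prop :=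
  forall H, H \in psubgroups p X ->
    \sum_(K in psubgroups p X | H \subset K) k K = cent_ratio X H.

Section FstarEulerChar.

Variables (p : nat) (gT : finGroupType) (X : {group gT}).
Implicit Types H K L : {group gT}.

Local Notation Ob := (Fstar_obj p X).
Local Notation zeta := (fun H K : {group gT} => Fstar_zeta X H K).

Lemma Fstar_obj_psub H : (H \in Ob) = (H \in psubgroups p X) && (H != 1%G).
Proof. by rewrite !inE andbA. Qed.

Lemma psubgroupsJ H g : g \in X -> ((H :^ g)%G \in psubgroups p X) = (H \in psubgroups p X).
Proof. by move=> gX; rewrite !inE /= -{1}(conjGid gX) conjSg pgroupJ. Qed.

Lemma Fstar_objJ H g : g \in X -> ((H :^ g)%G \in Ob) = (H \in Ob).
Proof.
by move=> gX; rewrite !Fstar_obj_psub psubgroupsJ //; congr (_ && ~~ _); apply: conjsg_eq1.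
Qed.

Lemma cent_ratioJ H g : g \in X -> cent_ratio X (H :^ g) = cent_ratio X H.
Proof. by move=> gX; rewrite /cent_ratio centJ -{1}(conjGid gX) -conjIg cardJg. Qed.

Lemma mul_cent_transporter H K : ('C_X(H) * transporter X H K)%g = transporter X H K.
Proof.
apply/setP=> g; apply/idP/idP => [|Tg]; last first.
  by apply/mulsgP; exists 1%g g; rewrite ?group1 ?mul1g.
case/mulsgP=> c h /setIP[cX cH]; rewrite !inE => /andP[hX sHhK] ->.
by rewrite groupM //= conjsgM (normP (subsetP (cent_sub H) c cH)).
Qed.

Lemma Fstar_zeta_cardE H K : (Fstar_zeta X H K * #|'C_X(H)|)%N = #|transporter X H K|.
Proof.
rewrite /Fstar_zeta /Fstar_hom -[in RHS]mul_cent_transporter.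
rewrite (@card_uniform_partition _ #|'C_X(H)| _ _ _ (rcosets_partition_mul_set _ _)) //.
by move=> _ /rcosetsP[x _ ->]; rewrite card_rcoset.
Qed.

Lemma Fstar_zeta_conjE H K :
  (zeta H K)%:R * #|'C_X(H)|%:R = \sum_(g in X) (H :^ g \subset K)%:R :> rat.
Proof.
rewrite -natrM Fstar_zeta_cardE -sum1_card natr_sum big_mkcond [RHS]big_mkcond /=.
by apply: eq_bigr => g _; rewrite inE; case: (g \in X); case: (H :^ g \subset K).
Qed.

Lemma Fstar_weighting k : psub_moebius p X k -> is_weighting Ob zeta k.
Proof.
move=> kP H; rewrite Fstar_obj_psub => /andP[HP H_neq1].
have C_neq0 : #|'C_X(H)|%:R != 0 :> rat by rewrite pnatr_eq0 -lt0n.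
apply: (mulIf C_neq0); rewrite mul1r big_distrl /=.
under eq_bigr do rewrite mulrAC Fstar_zeta_conjE big_distrl /=.
rewrite exchange_big /= -[RHS](mulfVK (_ : #|X|%:R != 0 :> rat)); last first.
  by rewrite pnatr_eq0 -lt0n.
rewrite mulr_natr -sumr_const; apply: eq_bigr => g gX.
rewrite -/(cent_ratio X H) -(cent_ratioJ H gX) -(kP (H :^ g)%G) ?psubgroupsJ //=.
under eq_bigr do rewrite mulr_natl mulrb.
(* Restricting to Ob only drops the trivial subgroup, which does not contain
   the nontrivial H :^ g. *)
rewrite -big_mkcondr; apply: eq_bigl => K; rewrite Fstar_obj_psub -andbA.
congr (_ && _); apply: andb_idl => sHgK; apply: contraTneq sHgK => ->.
by rewrite subG1 conjsg_eq1.
Qed.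

Lemma Fstar_coweighting c :
    (forall L, L \in Ob -> \sum_(H in Ob | H \subset L) c H = #|X|%:R^-1) ->
  is_coweighting Ob zeta (fun H => c H * #|'C_X(H)|%:R).
Proof.
move=> cP K KOb.
under eq_bigr do rewrite -mulrA (mulrC #|_|%:R) Fstar_zeta_conjE big_distrr /=.
rewrite exchange_big /= -[RHS](mulVf (_ : #|X|%:R != 0 :> rat)); last first.
  by rewrite pnatr_eq0 -lt0n.
rewrite mulr_natr -sumr_const; apply: eq_bigr => g gX.
rewrite -(cP (K :^ g^-1)%G) ?Fstar_objJ ?groupV //.
under eq_bigr do rewrite mulr_natr mulrb.
by rewrite -big_mkcondr; apply: eq_bigl => H; rewrite sub_conjg.
Qed.

Lemma exists_psub_moebius : exists k, psub_moebius p X k.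
Proof.
have [k kP] := @triangular_system_solvable _ _ (fun H K : {group gT} => H \subset K)
  (fun H => #|H|) (fun H => cent_ratio X H) (fun H => subxx H) (@proper_group_card _)
  (psubgroups p X).
by exists k.
Qed.

Lemma exists_Fstar_cosolution : exists c : {group gT} -> rat,
  forall L, L \in Ob -> \sum_(H in Ob | H \subset L) c H = #|X|%:R^-1.
Proof.
have co_rank L H : H \subset L -> L != H -> (#|gT| - #|L| < #|gT| - #|H|)%N.
  move=> sHL; rewrite eq_sym => /(proper_group_card sHL) ltHL.
  by rewrite ltn_sub2l // (leq_trans ltHL (max_card _)).
have [c cP] := @triangular_system_solvable _ _ (fun L H : {group gT} => H \subset L)
  (fun H => #|gT| - #|H|)%N (fun _ => #|X|%:R^-1 : rat) (fun H => subxx H) co_rank Ob.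
by exists c.
Qed.

Lemma psub_moebius_sum_Fstar k : psub_moebius p X k -> \sum_(K in Ob) k K = 1 - k 1%G.
Proof.
have oneP : 1%G \in psubgroups p X by rewrite inE sub1G pgroup1.
move=> /(_ _ oneP); rewrite (bigD1 1%G) ?oneP //= /cent_ratio cent1T setIT divff; last first.
  by rewrite pnatr_eq0 -lt0n.
move=> <-; rewrite addrAC subrr add0r; apply: eq_bigl => K.
by rewrite Fstar_obj_psub sub1G andbT.
Qed.

Lemma Fstar_euler_char_moebius k : psub_moebius p X k -> Fstar_euler_char p X (1 - k 1%G).
Proof.
move=> kP; have [c cP] := exists_Fstar_cosolution.
rewrite -(psub_moebius_sum_Fstar kP).
exact: euler_char_weighting (Fstar_weighting kP) (Fstar_coweighting cP).
Qed.

End FstarEulerChar.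

Section DirectProduct.

Variables (p : nat) (aT bT : finGroupType) (A : {group aT}) (B : {group bT}).
Implicit Types (H : {group (aT * bT)}) (E : {group aT}) (F : {group bT}).

Definition pr1G H : {group aT} := (fst_morphism aT bT @* H)%G.
Definition pr2G H : {group bT} := (snd_morphism aT bT @* H)%G.

Lemma mem_pr1G H x : x \in H -> x.1 \in pr1G H.
Proof. by move=> xH; apply: mem_morphim; rewrite ?inE. Qed.

Lemma mem_pr2G H x : x \in H -> x.2 \in pr2G H.
Proof. by move=> xH; apply: mem_morphim; rewrite ?inE. Qed.

Lemma subsetX_pr H (C : {set aT}) (D : {set bT}) :
  (H \subset setX C D) = (pr1G H \subset C) && (pr2G H \subset D).
Proof.
apply/idP/andP => [sHCD|[s1 s2]].
  by split; apply/subsetP => _ /morphimP[x _ xH ->];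
    have := subsetP sHCD x xH; rewrite inE => /andP[].
apply/subsetP => x xH.
by rewrite inE (subsetP s1 _ (mem_pr1G xH)) (subsetP s2 _ (mem_pr2G xH)).
Qed.

Lemma cent_setX H : 'C_(setX A B)(H) = setX 'C_A(pr1G H) 'C_B(pr2G H).
Proof.
apply/setP => -[a b]; rewrite !inE -!andbA; congr (_ && _); rewrite andbCA; congr (_ && _).
apply/centP/andP => [cH|[/centP c1 /centP c2] [x1 x2] xH].
  by split; apply/centP => _ /morphimP[x _ xH ->]; have := cH x xH; case.
have /= e1 := c1 _ (mem_pr1G xH); have /= e2 := c2 _ (mem_pr2G xH).
by change ((a * x1, b * x2) = (x1 * a, x2 * b))%g; rewrite e1 e2.
Qed.

Lemma cent_ratio_setX H :
  cent_ratio (setX A B) H = cent_ratio A (pr1G H) * cent_ratio B (pr2G H).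
Proof. by rewrite /cent_ratio cent_setX !cardsX !natrM invfM mulrACA. Qed.

Lemma setX_group_eq1 E F : (setX_group E F == 1%G) = (E == 1%G) && (F == 1%G).
Proof. by rewrite /eq_op /= -!/(_ == 1%g) !trivg_card1 cardsX muln_eq1. Qed.

Lemma psubgroups_setX E F :
  E \in psubgroups p A -> F \in psubgroups p B ->
  setX_group E F \in psubgroups p (setX A B).
Proof.
rewrite !inE => /andP[sEA pE] /andP[sFB pF].
by rewrite setXS //= /pgroup cardsX pnatM; apply/andP.
Qed.

Lemma psubgroups_pr H : H \in psubgroups p (setX A B) ->
  pr1G H \in psubgroups p A /\ pr2G H \in psubgroups p B.
Proof.
rewrite inE subsetX_pr => /andP[/andP[s1 s2] pH].
by rewrite !inE s1 s2 !morphim_pgroup.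
Qed.

Lemma psub_moebius_setX kA kB :
    psub_moebius p A kA -> psub_moebius p B kB ->
  exists k, psub_moebius p (setX_group A B) k /\ k 1%G = kA 1%G * kB 1%G.
Proof.
move=> kAP kBP.
have sum_split (a : {group aT} -> bool) (b : {group bT} -> bool) :
    \sum_(E in psubgroups p A) \sum_(F in psubgroups p B) (kA E * kB F) *+ (a E && b F)
  = (\sum_(E in psubgroups p A) kA E *+ a E) * \sum_(F in psubgroups p B) kB F *+ b F.
  rewrite big_distrl /=; apply: eq_bigr => E _; rewrite big_distrr /=; apply: eq_bigr => F _.
  by case: (a E); case: (b F); rewrite ?mulr0n ?mulr1n ?mul0r ?mulr0.
exists (fun K => \sum_(E in psubgroups p A) \sum_(F in psubgroups p B)
          (kA E * kB F) *+ (K == setX_group E F)); split; last first.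
  under eq_bigr do under eq_bigr do rewrite eq_sym setX_group_eq1.
  by rewrite sum_split !sum_mulrb_eq !inE !sub1G !pgroup1.
move=> H HP; have [P1 P2] := psubgroups_pr HP.
rewrite exchange_big /=; under eq_bigr do rewrite exchange_big /=.
under eq_bigr => E EP do under eq_bigr => F FP do
  rewrite sum_mulrb_eq psubgroups_setX // subsetX_pr.
rewrite sum_split cent_ratio_setX -kAP // -kBP // !big_mkcondr /=.
by congr (_ * _); apply: eq_bigr => ? _; rewrite mulrb.
Qed.

End DirectProduct.

Lemma psub_moebius_trivg (p : nat) (gT : finGroupType) :
  psub_moebius p [1 gT]%G (fun K => 1 *+ (K == 1%G)).
Proof.
move=> H; rewrite inE => /andP[sH1 _].
rewrite sum_mulrb_eq !inE sub1G pgroup1 sH1 /cent_ratio.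
by rewrite (setIidPl (sub1G _)) cards1 divr1.
Qed.

Lemma prodG_psub_moebius (p : nat) (gT : nat -> finGroupType)
    (G : forall i, {group gT i}) (n : nat) :
  exists (x : nat -> rat) (k : {group prodT gT n} -> rat),
    [/\ forall i, (i < n)%N -> exists ki, psub_moebius p (G i) ki /\ x i = ki 1%G,
        psub_moebius p (prodG G n) k
      & k 1%G = \prod_(i < n) x i].
Proof.
elim: n => [|m [x [k [xP kP k1]]]].
  exists (fun _ => 0), (fun K => 1 *+ (K == 1%G)); split=> //.
  - exact: psub_moebius_trivg.
  - by rewrite big_ord0 eqxx.
have [km kmP] := exists_psub_moebius p (G m).
have [k' [k'P k'1]] := psub_moebius_setX kP kmP.
exists (fun i => if i == m then km 1%G else x i), k'; split=> //.
- move=> i; rewrite ltnS leq_eqVlt => /predU1P[->|ltim]; first by exists km; rewrite eqxx.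
  by rewrite (ltn_eqF ltim); apply: xP.
- rewrite big_ord_recr /= eqxx k'1 k1; congr (_ * _); apply: eq_bigr => i _.
  by rewrite (ltn_eqF (ltn_ord i)).
Qed.

Local Close Scope ring_scope.
Local Close Scope group_scope.

Theorem theorem6p2 (p : nat) (gT : nat -> finGroupType)
    (G : forall i, {group gT i}) (n : nat) :
  prime p ->
  exists (x : nat -> rat) (y : rat),
    [/\ forall i, i < n -> Fstar_euler_char p (G i) (x i),
        Fstar_euler_char p (prodG G n) y
      & (1 - y = \prod_(i < n) (1 - x i))%R].
Proof.
move=> _; have [x [k [xP kP k1]]] := prodG_psub_moebius p G n.
exists (fun i => 1 - x i)%R, (1 - k 1%G)%R; split.
- by move=> i /xP[ki [kiP ->]]; apply: Fstar_euler_char_moebius.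
- exact: Fstar_euler_char_moebius.
- by rewrite subKr k1; apply: eq_bigr => i _; rewrite subKr.
Qed.
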